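(* Let $h\in\mathbb R\setminus\{0\}$ and put $$\alpha:=1,\qquad \beta:=\frac{\frac h2\exp(-\frac{h^2}8)}{\sqrt{2\pi}\,(\Phi(\frac h2)-\frac12)}.$$ Then for all $x,y\in\mathbb R$ with $|x|<|y|$, $$\exp\Big(-\alpha\frac{y^2-x^2}2\Big)<\frac{\Phi(y+\frac h2)-\Phi(y-\frac h2)}{\Phi(x+\frac h2)-\Phi(x-\frac h2)}<\exp\Big(-\beta\frac{y^2-x^2}2\Big).$$ These constants are optimal: if $\alpha$ is replaced by any smaller constant, the left inequality fails for some $x,y$ with $|x|<|y|$, and if $\beta$ is replaced by any larger constant, the right inequality fails for some such $x,y$. Moreover, $$\beta>\exp\Big(-\frac{h^2}{12}-\frac{h^4}{1440}\Big)>1-\frac{h^2}{12}.$$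
   Context: $\Phi$ is the standard normal distribution function. *)

From Stdlib Require Import Reals.
From Coquelicot Require Import Coquelicot.
Open Scope R_scope.

Definition std_normal_pdf (t : R) : R := / sqrt (2 * PI) * exp (- t ^ 2 / 2).
Definition Phi (x : R) : R :=
  RInt_gen std_normal_pdf (Rbar_locally m_infty) (at_point x).

Definition Phi_ratio (h x y : R) : R :=
  (Phi (y + h / 2) - Phi (y - h / 2)) / (Phi (x + h / 2) - Phi (x - h / 2)).

Definition beta_const (h : R) : R :=
  (h / 2 * exp (- h ^ 2 / 8)) / (sqrt (2 * PI) * (Phi (h / 2) - 1 / 2)).

From Stdlib Require Import Reals Lra Psatz.
From Coquelicot Require Import Coquelicot.
Open Scope R_scope.

(* Write [P u = int_0^u exp (- t^2 / 2) dt], so that [Phi x = 1/2 + P x / sqrt (2 pi)]; the value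
   [P (+oo) = sqrt (pi / 2)] comes from the classical fact that
   [P x ^ 2 + 2 int_0^1 exp (- x^2 (1 + t^2) / 2) / (1 + t^2) dt] has zero derivative.
   With [a = |h| / 2], numerator and denominator of the ratio are, up to the same constant,
   [W y = P (y + a) - P (y - a) = exp (- y^2 / 2) J y] where [J y = int_0^a exp (- t^2 / 2) 2 cosh (y t) dt]
   is even and strictly increasing in [|y|]: this is the left inequality.  For the right one,
   [y |-> W y exp (beta y^2 / 2)] with [beta = a exp (- a^2 / 2) / P a] has a derivative of the sign of
   [a J y - P a int_0^a 2 cosh (y t) dt], which is negative by Chebyshev's integral inequality
   ([exp (- t^2 / 2)] decreases while [cosh (y t)] increases).  Sharpness is witnessed at [x = 0]:
   [J y <= 2 exp (y a) P a] for large [y] and [J y >= 2 P a + y^2 (P a - a exp (- a^2 / 2))] for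
   small [y].  The lower bound on [beta] is [P a < a exp (- a^2 / 6 + a^4 / 90)], proved by
   differentiating. *)

Notation RInt_scalR := (@RInt_scal R_CompleteNormedModule).
Notation RInt_plusR := (@RInt_plus R_CompleteNormedModule).
Notation RInt_minusR := (@RInt_minus R_CompleteNormedModule).
Notation RInt_comp_linR := (@RInt_comp_lin R_CompleteNormedModule).

Ltac continuity_by_derive :=
  intros; apply (ex_derive_continuous (K:=R_AbsRing) (V:=R_NormedModule));
  auto_derive; auto.

Ltac exp_args_by_field :=
  repeat match goal with |- context [exp ?a] => match goal with |- context [exp ?b] =>
    assert_fails (constr_eq a b); replace (exp a) with (exp b) by (f_equal; field) end end.

Ltac unfold_R_ops :=
  unfold scal, plus, opp, minus, mult, zero; cbn -[pow exp Rdiv Rinv sqrt ln atan PI RInt];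
  match goal with |- ?a = ?b => change (@eq R a b) | _ => idtac end.

Lemma ex_RInt_of_continuous (f : R -> R) (a b : R) :
  (forall x, continuous f x) -> ex_RInt f a b.
Proof.
intros Hf; apply (ex_RInt_continuous (V:=R_CompleteNormedModule)); intros; apply Hf.
Qed.

Lemma strict_incr_of_derive_pos (f f' : R -> R) (lo : R) :
  (forall x, lo <= x -> is_derive f x (f' x)) -> (forall x, lo < x -> 0 < f' x) ->
  forall x y, lo <= x -> x < y -> f x < f y.
Proof.
intros Hd Hpos x y Hx Hxy.
destruct (MVT_cor2 f f' x y Hxy) as [c [Hc Hcxy]].
{ intros c Hc; apply is_derive_Reals, Hd; lra. }
assert (0 < f' c * (y - x)) by (apply Rmult_lt_0_compat; [apply Hpos|]; lra).
lra.
Qed.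

Lemma exp_le_exp_of_le x y : x <= y -> exp x <= exp y.
Proof. intros [H|<-]; [left; apply exp_increasing, H | right; reflexivity]. Qed.

(* [exp (c s) >= 1 + c s] and [(1 + c s) (1 + q s) = 1 + s (c + q + c q s)]. *)
Lemma exp_opp_mul_le c q s :
  0 <= s -> 0 < 1 + q * s -> 0 <= c + q + c * q * s -> exp (- (c * s)) <= 1 + q * s.
Proof.
intros Hs Hq Hcq.
assert (HE : 1 + c * s <= exp (c * s)) by apply exp_ineq1_le.
assert (HEpos := exp_pos (c * s)).
assert (Hprod : 1 <= (1 + c * s) * (1 + q * s)).
{ replace ((1 + c * s) * (1 + q * s)) with (1 + s * (c + q + c * q * s)) by ring.
  assert (0 <= s * (c + q + c * q * s)) by (apply Rmult_le_pos; assumption); lra. }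
rewrite exp_Ropp; apply Rmult_le_reg_l with (exp (c * s)); [exact HEpos|].
rewrite Rinv_r by lra; nra.
Qed.

Definition gauss (t : R) : R := exp (- t ^ 2 / 2).
Definition gauss_int (u : R) : R := RInt gauss 0 u.

Lemma gauss_pos t : 0 < gauss t.
Proof. apply exp_pos. Qed.

Lemma gauss_continuous x : continuous gauss x.
Proof. unfold gauss; continuity_by_derive. Qed.

Lemma ex_RInt_gauss a b : ex_RInt gauss a b.
Proof. apply ex_RInt_of_continuous, gauss_continuous. Qed.

Lemma is_derive_gauss_int x : is_derive gauss_int x (gauss x).
Proof.
apply (is_derive_RInt gauss gauss_int 0 x); [|apply gauss_continuous].
apply filter_forall; intros; apply (RInt_correct (V:=R_CompleteNormedModule)), ex_RInt_gauss.
Qed.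

Lemma gauss_int_nonneg x : 0 <= x -> 0 <= gauss_int x.
Proof.
intros Hx; apply RInt_ge_0; [lra | apply ex_RInt_gauss | intros; left; apply gauss_pos].
Qed.

Lemma gauss_lt s t : 0 <= s < t -> gauss t < gauss s.
Proof. intros H; unfold gauss; apply exp_increasing; nra. Qed.

Lemma gauss_le s t : 0 <= s <= t -> gauss t <= gauss s.
Proof. intros [Hs [Hst|<-]]; [left; apply gauss_lt|right]; lra. Qed.

Lemma gauss_int_pos a : 0 < a -> 0 < gauss_int a.
Proof.
intros Ha; apply RInt_gt_0; [exact Ha | intros; apply gauss_pos | intros; apply gauss_continuous].
Qed.

Lemma gauss_0 : gauss 0 = 1.
Proof. unfold gauss; rewrite <- exp_0; f_equal; field. Qed.

Lemma gauss_int_lt a : 0 < a -> gauss_int a < a.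
Proof.
intros Ha; unfold gauss_int.
replace a with (RInt (fun _ => 1) 0 a) at 2 by (rewrite RInt_const; unfold_R_ops; ring).
apply RInt_lt; [exact Ha | intros; apply continuous_const | intros; apply gauss_continuous |].
intros t Ht; rewrite <- gauss_0; apply gauss_lt; lra.
Qed.

Lemma gauss_int_opp u : gauss_int (- u) = - gauss_int u.
Proof.
unfold gauss_int.
assert (E := RInt_comp_linR gauss (-1) 0 0 u (ex_RInt_gauss _ _)).
replace (-1 * 0 + 0) with 0 in E by ring; replace (-1 * u + 0) with (- u) in E by ring.
rewrite <- E, (RInt_ext _ (fun t => -1 * gauss t)).
- rewrite (RInt_scalR gauss) by apply ex_RInt_gauss.
  unfold_R_ops; ring.
- intros t _; unfold gauss; unfold_R_ops.
  replace ((-1 * t + 0) ^ 2) with (t ^ 2) by ring; ring.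
Qed.

Definition defect_kernel (x t : R) : R := exp (- (x ^ 2 * (1 + t ^ 2)) / 2) / (1 + t ^ 2).
Definition gauss_defect (x : R) : R := RInt (defect_kernel x) 0 1.

Lemma one_plus_sq_pos t : 0 < 1 + t ^ 2.
Proof. nra. Qed.

Lemma defect_kernel_continuous x t : continuous (defect_kernel x) t.
Proof. unfold defect_kernel; assert (H := one_plus_sq_pos t); continuity_by_derive; lra. Qed.

Lemma Derive_defect_kernel u t :
  Derive (fun x => defect_kernel x t) u = - u * exp (- (u ^ 2 * (1 + t ^ 2)) / 2).
Proof.
apply is_derive_unique; unfold defect_kernel; assert (H := one_plus_sq_pos t).
auto_derive; [lra|]. exp_args_by_field; field; lra.
Qed.

Lemma Derive_defect_kernel_continuous x t :
  continuity_2d_pt (fun u v => Derive (fun z => defect_kernel z v) u) x t.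
Proof.
apply continuity_2d_pt_ext with (f := fun u v => - u * exp (- (u ^ 2 * (1 + v ^ 2)) / 2)).
{ intros; symmetry; apply Derive_defect_kernel. }
apply continuity_2d_pt_mult; [apply continuity_2d_pt_opp, continuity_2d_pt_id1|].
apply continuity_1d_2d_pt_comp; [apply derivable_continuous_pt, derivable_pt_exp|].
apply continuity_2d_pt_ext with (f := fun u v => (- (1 / 2)) * ((u * u) * (1 + v * v))).
{ intros; field. }
repeat first [ apply continuity_2d_pt_mult | apply continuity_2d_pt_plus
             | apply continuity_2d_pt_const | apply continuity_2d_pt_id1
             | apply continuity_2d_pt_id2 ].
Qed.

(* Differentiate under the integral sign, then substitute [s = x t]. *)
Lemma is_derive_gauss_defect x : is_derive gauss_defect x (- gauss x * gauss_int x).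
Proof.
assert (H : is_derive gauss_defect x (RInt (fun t => Derive (fun u => defect_kernel u t) x) 0 1)).
{ apply (is_derive_RInt_param defect_kernel 0 1 x).
  - apply filter_forall; intros u t _; unfold defect_kernel.
    assert (H := one_plus_sq_pos t); auto_derive; lra.
  - intros t _; apply Derive_defect_kernel_continuous.
  - apply filter_forall; intros u; apply ex_RInt_of_continuous, defect_kernel_continuous. }
replace (- gauss x * gauss_int x) with (RInt (fun t => Derive (fun u => defect_kernel u t) x) 0 1);
  [exact H|].
rewrite (RInt_ext _ (fun t => (- gauss x) * (x * gauss (x * t + 0)))).
2:{ intros t _; rewrite Derive_defect_kernel; unfold gauss.
    replace (exp (- (x ^ 2 * (1 + t ^ 2)) / 2))
      with (exp (- x ^ 2 / 2) * exp (- (x * t + 0) ^ 2 / 2))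
      by (rewrite <- exp_plus; f_equal; field).
    unfold_R_ops; ring. }
rewrite (RInt_scalR (fun t => x * gauss (x * t + 0))).
2:{ apply ex_RInt_of_continuous; intros; unfold gauss; continuity_by_derive. }
rewrite (RInt_comp_linR gauss) by apply ex_RInt_gauss.
unfold gauss_int; unfold_R_ops; do 3 f_equal; ring.
Qed.

Lemma gauss_defect_0 : gauss_defect 0 = PI / 4.
Proof.
unfold gauss_defect; rewrite (RInt_ext _ (fun t => / (1 + t ^ 2))).
2:{ intros t _; unfold defect_kernel; unfold_R_ops.
    replace (- (0 ^ 2 * (1 + t ^ 2)) / 2) with 0 by field.
    rewrite exp_0; field; generalize (one_plus_sq_pos t); lra. }
apply is_RInt_unique.
replace (PI / 4) with (minus (atan 1) (atan 0)) by (unfold_R_ops; rewrite atan_1, atan_0; field).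
apply (is_RInt_derive (V:=R_CompleteNormedModule)).
- intros; apply is_derive_Reals, derivable_pt_lim_atan.
- intros t _; generalize (one_plus_sq_pos t); continuity_by_derive; lra.
Qed.

Lemma gauss_int_sq_add_defect x : gauss_int x ^ 2 + 2 * gauss_defect x = PI / 2.
Proof.
set (F := fun x => gauss_int x ^ 2 + 2 * gauss_defect x).
assert (HF : forall x, is_derive F x 0).
{ intros u; unfold F.
  replace 0 with (plus (INR 2 * gauss u * gauss_int u ^ pred 2) (scal 2 (- gauss u * gauss_int u)))
    by (unfold_R_ops; simpl; ring).
  apply (is_derive_plus (K:=R_AbsRing) (V:=R_NormedModule)).
  - apply (is_derive_pow (fun u => gauss_int u) 2 u), is_derive_gauss_int.
  - apply is_derive_scal, is_derive_gauss_defect. }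
assert (HF0 : F 0 = PI / 2).
{ unfold F, gauss_int; rewrite RInt_point, gauss_defect_0; unfold_R_ops; field. }
change (F x = PI / 2); rewrite <- HF0.
destruct (Rtotal_order x 0) as [Hx|[->|Hx]]; [|reflexivity|symmetry];
  apply eq_is_derive; auto.
Qed.

Lemma gauss_le_1 t : gauss t <= 1.
Proof.
unfold gauss; rewrite <- exp_0.
destruct (Req_dec t 0) as [->|Ht]; [right; f_equal; field|].
left; apply exp_increasing; assert (0 < t ^ 2) by (apply pow2_gt_0; auto); lra.
Qed.

Lemma mul_gauss_le_1 x : x * gauss x <= 1.
Proof.
assert (H1 : 1 + x ^ 2 / 2 <= exp (x ^ 2 / 2)) by apply exp_ineq1_le.
assert (H2 : gauss x * exp (x ^ 2 / 2) = 1).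
{ unfold gauss; rewrite <- exp_plus, <- exp_0; f_equal; field. }
assert (Hx : x <= exp (x ^ 2 / 2)) by nra.
assert (Hg := gauss_pos x).
rewrite <- H2; apply Rmult_le_compat_l with (r := gauss x) in Hx; lra.
Qed.

Lemma gauss_defect_bounds x : 0 <= gauss_defect x <= gauss x.
Proof.
assert (Hk : forall t, 0 <= t <= 1 -> 0 < defect_kernel x t <= gauss x).
{ intros t Ht; unfold defect_kernel.
  replace (exp (- (x ^ 2 * (1 + t ^ 2)) / 2)) with (gauss x * gauss (x * t))
    by (unfold gauss; rewrite <- exp_plus; f_equal; field).
  assert (Hg := gauss_pos x); assert (Hgt := gauss_pos (x * t)); assert (Hgt1 := gauss_le_1 (x * t)).
  assert (Ht2 : 1 <= 1 + t ^ 2) by nra.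
  split; [apply Rdiv_lt_0_compat; nra|].
  apply Rle_div_l; nra. }
assert (Hex : ex_RInt (defect_kernel x) 0 1) by apply ex_RInt_of_continuous, defect_kernel_continuous.
split.
- apply RInt_ge_0; [lra | exact Hex | intros t Ht; left; apply Hk; lra].
- replace (gauss x) with (RInt (fun _ => gauss x) 0 1) by (rewrite RInt_const; unfold_R_ops; ring).
  apply RInt_le; [lra | exact Hex | apply ex_RInt_const | intros t Ht; apply Hk; lra].
Qed.

Lemma gauss_int_tail x :
  0 < x -> 0 <= sqrt (PI / 2) - gauss_int x <= 2 / (sqrt (PI / 2) * x).
Proof.
intros Hx.
set (L := sqrt (PI / 2)).
assert (HL : 0 < L) by (apply sqrt_lt_R0; generalize PI_RGT_0; lra).
assert (HL2 : L * L = PI / 2) by (apply sqrt_sqrt; generalize PI_RGT_0; lra).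
assert (HP := gauss_int_nonneg x ltac:(lra)).
assert (HPG := gauss_int_sq_add_defect x).
destruct (gauss_defect_bounds x) as [HG0 HG1].
assert (Hxg := mul_gauss_le_1 x).
assert (HPL : gauss_int x <= L) by nra.
split; [lra|].
apply Rle_div_r; [nra|].
assert (L * (L - gauss_int x) <= 2 * gauss x) by nra.
nra.
Qed.

Lemma gauss_int_lim_m_infty :
  filterlim gauss_int (Rbar_locally m_infty) (locally (- sqrt (PI / 2))).
Proof.
set (L := sqrt (PI / 2)).
assert (HL : 0 < L) by (apply sqrt_lt_R0; generalize PI_RGT_0; lra).
apply filterlim_locally; intros eps.
exists (- (2 / (L * eps))); intros u Hu.
assert (HM : 0 < 2 / (L * eps))
  by (apply Rdiv_lt_0_compat; [lra | apply Rmult_lt_0_compat; [lra | apply cond_pos]]).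
assert (Htail := gauss_int_tail (- u) ltac:(lra)); fold L in Htail.
change (Rabs (gauss_int u - - L) < eps).
rewrite <- (Ropp_involutive u), gauss_int_opp, Rabs_pos_eq by lra.
apply Rle_lt_trans with (2 / (L * - u)); [lra|].
apply Rlt_div_l; [nra|].
apply Rmult_lt_compat_r with (r := L * eps) in Hu; [|apply Rmult_lt_0_compat; [lra | apply cond_pos]].
replace (- (2 / (L * eps)) * (L * eps)) with (-2) in Hu by (field; split; [apply Rgt_not_eq, cond_pos | lra]).
nra.
Qed.

Lemma Phi_gauss_int x : Phi x = / 2 + / sqrt (2 * PI) * gauss_int x.
Proof.
set (c := / sqrt (2 * PI)).
set (L := sqrt (PI / 2)).
assert (HcL : c * L = / 2).
{ assert (Hs : 0 < sqrt (2 * PI)) by (apply sqrt_lt_R0; generalize PI_RGT_0; lra).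
  assert (E : L = sqrt (2 * PI) / 2).
  { apply sqrt_lem_1; [generalize PI_RGT_0; lra | lra |].
    replace (sqrt (2 * PI) / 2 * (sqrt (2 * PI) / 2)) with (sqrt (2 * PI) * sqrt (2 * PI) / 4) by field.
    rewrite sqrt_sqrt; [field | generalize PI_RGT_0; lra]. }
  rewrite E; unfold c; field; lra. }
set (f := fun u => c * gauss_int u).
assert (Hd : forall z, is_derive f z (std_normal_pdf z)) by (intros; apply is_derive_scal, is_derive_gauss_int).
assert (HDf : forall z, Derive f z = std_normal_pdf z) by (intros; apply is_derive_unique, Hd).
assert (HG : is_RInt_gen (Derive f) (Rbar_locally m_infty) (at_point x) (f x - c * - L)).
{ apply is_RInt_gen_Derive.
  - apply filter_forall; intros; eexists; apply Hd.
  - apply filter_forall; intros ab z _; apply continuous_ext with std_normal_pdf.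
    + intros; symmetry; apply HDf.
    + unfold std_normal_pdf; continuity_by_derive.
  - exact (filterlim_comp _ _ _ gauss_int (fun z => scal c z) _ _ _
             gauss_int_lim_m_infty (filterlim_scal_r c _)).
  - intros Q HQ; exact (locally_singleton _ _ HQ). }
unfold Phi; rewrite (is_RInt_gen_unique std_normal_pdf (f x - c * - L)).
- unfold f; lra.
- apply (is_RInt_gen_ext (Derive f)); [|exact HG].
  apply filter_forall; intros; apply HDf.
Qed.

Definition two_cosh (u : R) : R := exp u + exp (- u).

Lemma two_cosh_lt u v : 0 <= u < v -> two_cosh u < two_cosh v.
Proof.
intros [Hu Huv]; unfold two_cosh; rewrite !exp_Ropp.
assert (A1 : 1 <= exp u) by (generalize (exp_ineq1_le u); lra).
assert (A2 : exp u < exp v) by (apply exp_increasing; exact Huv).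
set (A := exp u) in *; set (B := exp v) in *.
apply Rmult_lt_reg_r with (r := A * B); [nra|].
replace ((A + / A) * (A * B)) with (A * A * B + B) by (field; lra).
replace ((B + / B) * (A * B)) with (B * B * A + A) by (field; lra).
assert (0 < (B - A) * (A * B - 1)) by (apply Rmult_lt_0_compat; nra).
nra.
Qed.

Lemma two_cosh_opp u : two_cosh (- u) = two_cosh u.
Proof. unfold two_cosh; rewrite Ropp_involutive; ring. Qed.

Lemma two_cosh_0 : two_cosh 0 = 2.
Proof. unfold two_cosh; rewrite Ropp_0, exp_0; ring. Qed.

Lemma two_cosh_pos u : 0 < two_cosh u.
Proof. unfold two_cosh; generalize (exp_pos u) (exp_pos (- u)); lra. Qed.

(* Two successive monotonicity arguments, for [sinh u - u] and then for [cosh u - 1 - u^2/2]. *)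
Lemma two_cosh_ge_quad u : 2 + u ^ 2 <= two_cosh u.
Proof.
assert (Hsinh : forall v, 0 < v -> 0 < exp v - exp (- v) - 2 * v).
{ intros v Hv.
  replace 0 with (exp 0 - exp (- 0) - 2 * 0) by (rewrite Ropp_0, exp_0; ring).
  apply (strict_incr_of_derive_pos (fun v => exp v - exp (- v) - 2 * v)
           (fun v => two_cosh v - 2) 0); try lra.
  - intros; unfold two_cosh; auto_derive; auto; ring.
  - intros z Hz; generalize (two_cosh_lt 0 z ltac:(lra)); rewrite two_cosh_0; lra. }
assert (Hcosh : forall v, 0 < v -> 0 < two_cosh v - 2 - v ^ 2).
{ intros v Hv.
  replace 0 with (two_cosh 0 - 2 - 0 ^ 2) by (rewrite two_cosh_0; ring).
  apply (strict_incr_of_derive_pos (fun v => two_cosh v - 2 - v ^ 2)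
           (fun v => exp v - exp (- v) - 2 * v) 0); auto; try lra.
  intros; unfold two_cosh; auto_derive; auto; ring. }
destruct (Rtotal_order u 0) as [H|[->|H]].
- rewrite <- two_cosh_opp; generalize (Hcosh (- u) ltac:(lra)); nra.
- rewrite two_cosh_0; lra.
- generalize (Hcosh u H); lra.
Qed.

Ltac ex_RInt_by_continuity :=
  apply ex_RInt_of_continuous; intros; unfold gauss, two_cosh; unfold_R_ops; continuity_by_derive.

Lemma gauss_sq_moment a : RInt (fun t => t ^ 2 * gauss t) 0 a = gauss_int a - a * gauss a.
Proof.
assert (E : RInt (fun t => t ^ 2 * gauss t - gauss t) 0 a = - a * gauss a).
{ apply is_RInt_unique.
  replace (- a * gauss a) with (minus ((fun t => - t * gauss t) a) ((fun t => - t * gauss t) 0))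
    by (unfold_R_ops; ring).
  apply (is_RInt_derive (V:=R_CompleteNormedModule) (fun t => - t * gauss t)).
  - intros t _; unfold gauss; auto_derive; auto; unfold_R_ops; exp_args_by_field; field.
  - intros; unfold gauss; continuity_by_derive. }
rewrite RInt_minusR in E by ex_RInt_by_continuity.
change (minus ?x ?y) with (x - y) in E; unfold gauss_int; lra.
Qed.

Lemma mul_gauss_lt_gauss_int a : 0 < a -> a * gauss a < gauss_int a.
Proof.
intros Ha; apply Rlt_0_minus; rewrite <- gauss_sq_moment.
apply RInt_gt_0; [exact Ha | | intros; unfold gauss; continuity_by_derive].
intros t Ht; apply Rmult_lt_0_compat; [apply pow_lt; lra | apply gauss_pos].
Qed.

Definition window (a y : R) : R := gauss_int (y + a) - gauss_int (y - a).
Definition gauss_cosh_int (a y : R) : R := RInt (fun t => gauss t * two_cosh (y * t)) 0 a.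

Lemma gauss_add y t : gauss (y + t) = gauss y * (gauss t * exp (- (y * t))).
Proof. unfold gauss; rewrite <- !exp_plus; f_equal; field. Qed.

Lemma gauss_sub y t : gauss (y - t) = gauss y * (gauss t * exp (y * t)).
Proof. unfold gauss; rewrite <- !exp_plus; f_equal; field. Qed.

(* Split [int_(y-a)^(y+a) gauss] at [y] and fold both halves onto [0, a]. *)
Lemma window_eq a y : window a y = gauss y * gauss_cosh_int a y.
Proof.
unfold window, gauss_int.
rewrite <- (RInt_Chasles (V:=R_CompleteNormedModule) gauss 0 (y - a) (y + a)),
        <- (RInt_Chasles (V:=R_CompleteNormedModule) gauss (y - a) y (y + a))
  by apply ex_RInt_gauss.
assert (Eright : RInt gauss y (y + a) = RInt (fun t => gauss (y + t)) 0 a).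
{ assert (E := RInt_comp_linR gauss 1 y 0 a (ex_RInt_gauss _ _)).
  replace (1 * 0 + y) with y in E by ring; replace (1 * a + y) with (y + a) in E by ring.
  rewrite <- E; apply RInt_ext; intros t _; unfold_R_ops.
  replace (1 * t + y) with (y + t) by ring; ring. }
assert (Eleft : RInt gauss (y - a) y = RInt (fun t => gauss (y - t)) 0 a).
{ assert (E := RInt_comp_linR gauss (-1) y a 0 (ex_RInt_gauss _ _)).
  replace (-1 * 0 + y) with y in E by ring; replace (-1 * a + y) with (y - a) in E by ring.
  rewrite RInt_scalR in E by ex_RInt_by_continuity.
  rewrite <- E, <- (opp_RInt_swap (V:=R_CompleteNormedModule)) by ex_RInt_by_continuity.
  rewrite (RInt_ext (fun t => gauss (-1 * t + y)) (fun t => gauss (y - t))); [unfold_R_ops; ring|].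
  intros t _; replace (-1 * t + y) with (y - t) by ring; reflexivity. }
rewrite Eright, Eleft, <- RInt_plusR by ex_RInt_by_continuity.
unfold gauss_cosh_int; rewrite <- RInt_scalR by ex_RInt_by_continuity.
unfold_R_ops; rewrite Rplus_minus_l.
apply RInt_ext; intros t _; rewrite gauss_add, gauss_sub; unfold two_cosh; unfold_R_ops; ring.
Qed.

Lemma gauss_cosh_int_abs a y : gauss_cosh_int a (Rabs y) = gauss_cosh_int a y.
Proof.
unfold gauss_cosh_int; destruct (Rle_dec 0 y) as [Hy|Hy].
- rewrite Rabs_pos_eq by exact Hy; reflexivity.
- rewrite Rabs_left by lra; apply RInt_ext; intros t _.
  rewrite <- Ropp_mult_distr_l, two_cosh_opp; reflexivity.
Qed.

Lemma window_abs a y : window a (Rabs y) = window a y.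
Proof.
rewrite !window_eq, gauss_cosh_int_abs; f_equal.
unfold gauss; rewrite <- Rsqr_pow2, <- Rsqr_abs, Rsqr_pow2; reflexivity.
Qed.

Lemma gauss_cosh_int_pos a y : 0 < a -> 0 < gauss_cosh_int a y.
Proof.
intros Ha; apply RInt_gt_0; [exact Ha | | intros; unfold gauss, two_cosh; continuity_by_derive].
intros; apply Rmult_lt_0_compat; [apply gauss_pos | apply two_cosh_pos].
Qed.

Lemma window_pos a y : 0 < a -> 0 < window a y.
Proof.
intros Ha; rewrite window_eq; apply Rmult_lt_0_compat; [apply gauss_pos | apply gauss_cosh_int_pos, Ha].
Qed.

Lemma gauss_cosh_int_lt a x y : 0 < a -> Rabs x < Rabs y -> gauss_cosh_int a x < gauss_cosh_int a y.
Proof.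
intros Ha Hxy; rewrite <- (gauss_cosh_int_abs a x), <- (gauss_cosh_int_abs a y).
assert (Hx := Rabs_pos x).
apply RInt_lt; [exact Ha | intros; unfold gauss, two_cosh; continuity_by_derive
               | intros; unfold gauss, two_cosh; continuity_by_derive |].
intros t Ht; apply Rmult_lt_compat_l; [apply gauss_pos|].
apply two_cosh_lt; split; [|apply Rmult_lt_compat_r]; nra.
Qed.

Definition cosh_int (a y : R) : R := RInt (fun t => two_cosh (y * t)) 0 a.

Lemma mul_cosh_int a y : y * cosh_int a y = exp (y * a) - exp (- (y * a)).
Proof.
unfold cosh_int; rewrite <- RInt_scalR by ex_RInt_by_continuity.
apply is_RInt_unique.
replace (exp (y * a) - exp (- (y * a)))
  with (minus ((fun t => exp (y * t) - exp (- (y * t))) a) ((fun t => exp (y * t) - exp (- (y * t))) 0))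
  by (unfold_R_ops; rewrite Rmult_0_r, Ropp_0, exp_0; ring).
apply (is_RInt_derive (V:=R_CompleteNormedModule) (fun t => exp (y * t) - exp (- (y * t)))).
- intros t _; auto_derive; auto; unfold two_cosh; unfold_R_ops; ring.
- intros; unfold two_cosh; unfold_R_ops; continuity_by_derive.
Qed.

Lemma gauss_mean_crossing a : 0 < a -> exists t0, 0 < t0 < a /\ gauss t0 = gauss_int a / a.
Proof.
intros Ha.
set (K := gauss_int a / a).
assert (HK0 : 0 < K) by (apply Rdiv_lt_0_compat; [apply gauss_int_pos|]; exact Ha).
assert (HK1 : K < 1) by (apply Rlt_div_l; [exact Ha | generalize (gauss_int_lt a Ha); lra]).
assert (HKa : gauss a < K) by (apply Rlt_div_r; [exact Ha | generalize (mul_gauss_lt_gauss_int a Ha); lra]).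
exists (sqrt (- 2 * ln K)).
assert (Hgt0 : gauss (sqrt (- 2 * ln K)) = K).
{ assert (ln K < 0) by (rewrite <- ln_1; apply ln_increasing; lra).
  unfold gauss; rewrite <- Rsqr_pow2, Rsqr_sqrt by lra.
  replace (- (-2 * ln K) / 2) with (ln K) by field; apply exp_ln; exact HK0. }
assert (Ht0 : 0 <= sqrt (- 2 * ln K)) by apply sqrt_pos.
split; [split|exact Hgt0].
- destruct (Req_dec (sqrt (- 2 * ln K)) 0) as [E|E]; [rewrite E, gauss_0 in Hgt0; lra | lra].
- destruct (Rlt_le_dec (sqrt (- 2 * ln K)) a) as [Hlt|Hge]; [exact Hlt|].
  generalize (gauss_le a (sqrt (- 2 * ln K)) ltac:(lra)); lra.
Qed.

(* Chebyshev's integral inequality for the decreasing [gauss] and the increasing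
   [t |-> two_cosh (y t)]: the integrand of [RInt F] below is positive off [t0]. *)
Lemma chebyshev_gauss_cosh a y :
  0 < a -> 0 < y -> a * gauss_cosh_int a y < gauss_int a * cosh_int a y.
Proof.
intros Ha Hy.
destruct (gauss_mean_crossing a Ha) as [t0 [Ht0 Hgt0]].
set (K := gauss_int a / a) in Hgt0.
set (F := fun t => (K - gauss t) * (two_cosh (y * t) - two_cosh (y * t0))).
assert (HF : forall t, 0 <= t -> t <> t0 -> 0 < F t).
{ intros t Ht Hne; unfold F; destruct (Rlt_le_dec t t0) as [Hlt|Hle].
  - assert (gauss t0 < gauss t) by (apply gauss_lt; lra).
    assert (two_cosh (y * t) < two_cosh (y * t0)) by (apply two_cosh_lt; split; nra).
    nra.
  - assert (gauss t < gauss t0) by (apply gauss_lt; lra).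
    assert (two_cosh (y * t0) < two_cosh (y * t)) by (apply two_cosh_lt; split; nra).
    nra. }
assert (HFc : forall t, continuous F t) by (intros; unfold F, gauss, two_cosh; continuity_by_derive).
assert (HI : 0 < RInt F 0 a).
{ rewrite <- (RInt_Chasles (V:=R_CompleteNormedModule) F 0 t0 a)
    by (apply ex_RInt_of_continuous; exact HFc).
  change (0 < RInt F 0 t0 + RInt F t0 a).
  apply Rplus_lt_0_compat; apply RInt_gt_0; try lra; intros; auto; apply HF; lra. }
assert (HE : RInt F 0 a = K * cosh_int a y - gauss_cosh_int a y).
{ rewrite (RInt_ext _ (fun t => (K * two_cosh (y * t) - gauss t * two_cosh (y * t))
                               - (K * two_cosh (y * t0) - two_cosh (y * t0) * gauss t)))
    by (intros; unfold F; unfold_R_ops; ring).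
  rewrite !RInt_minusR by ex_RInt_by_continuity.
  rewrite RInt_scalR, (RInt_scalR gauss), RInt_const by ex_RInt_by_continuity.
  fold (cosh_int a y) (gauss_cosh_int a y) (gauss_int a).
  unfold K; unfold_R_ops; field; lra. }
assert (HJ : gauss_cosh_int a y < gauss_int a / a * cosh_int a y) by (fold K; lra).
apply Rmult_lt_compat_l with (r := a) in HJ; [|exact Ha].
replace (a * (gauss_int a / a * cosh_int a y)) with (gauss_int a * cosh_int a y) in HJ by (field; lra).
exact HJ.
Qed.

Lemma is_derive_window a y : is_derive (window a) y (gauss (y + a) - gauss (y - a)).
Proof.
apply (is_derive_minus (K:=R_AbsRing) (V:=R_NormedModule) (fun y => gauss_int (y + a))).
- replace (gauss (y + a)) with (scal 1 (gauss (y + a))) by (unfold_R_ops; ring).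
  apply (is_derive_comp gauss_int (fun y => y + a)); [apply is_derive_gauss_int | auto_derive; auto].
- replace (gauss (y - a)) with (scal 1 (gauss (y - a))) by (unfold_R_ops; ring).
  apply (is_derive_comp gauss_int (fun y => y - a)); [apply is_derive_gauss_int | auto_derive; auto].
Qed.

Definition window_beta (a : R) : R := a * gauss a / gauss_int a.

Lemma window_deriv_add_neg a y :
  0 < a -> 0 < y -> gauss (y + a) - gauss (y - a) + window_beta a * y * window a y < 0.
Proof.
intros Ha Hy.
assert (Hcheb := chebyshev_gauss_cosh a y Ha Hy).
assert (HC := mul_cosh_int a y).
assert (HP := gauss_int_pos a Ha).
unfold window_beta; rewrite gauss_add, gauss_sub, window_eq.
replace (exp (y * a)) with (y * cosh_int a y + exp (- (y * a))) by lra.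
replace (gauss y * (gauss a * exp (- (y * a))) - gauss y * (gauss a * (y * cosh_int a y + exp (- (y * a))))
         + a * gauss a / gauss_int a * y * (gauss y * gauss_cosh_int a y))
  with (gauss y * gauss a * y / gauss_int a * (a * gauss_cosh_int a y - gauss_int a * cosh_int a y))
  by (field; lra).
apply Rmult_pos_neg; [|lra].
apply Rdiv_lt_0_compat; [repeat apply Rmult_lt_0_compat; auto; apply gauss_pos | exact HP].
Qed.

Lemma window_scaled_decr a x y :
  0 < a -> 0 <= x -> x < y ->
  window a y * exp (window_beta a * y ^ 2 / 2) < window a x * exp (window_beta a * x ^ 2 / 2).
Proof.
intros Ha Hx Hxy.
set (b := window_beta a).
set (dQ := fun y => (gauss (y + a) - gauss (y - a) + b * y * window a y) * exp (b * y ^ 2 / 2)).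
assert (HdQ : forall y, 0 < y -> dQ y < 0)
  by (intros z Hz; apply Rmult_neg_pos; [apply window_deriv_add_neg | apply exp_pos]; assumption).
apply Ropp_lt_cancel.
apply (strict_incr_of_derive_pos (fun y => - (window a y * exp (b * y ^ 2 / 2))) (fun y => - dQ y) 0);
  [| intros z Hz; generalize (HdQ z Hz); lra | exact Hx | exact Hxy].
intros z _; apply (is_derive_opp (K:=R_AbsRing) (V:=R_NormedModule)).
unfold dQ.
replace ((gauss (z + a) - gauss (z - a) + b * z * window a z) * exp (b * z ^ 2 / 2))
  with (plus (mult (gauss (z + a) - gauss (z - a)) (exp (b * z ^ 2 / 2)))
             (mult (window a z) (b * z * exp (b * z ^ 2 / 2)))) by (unfold_R_ops; ring).
apply (is_derive_mult (K:=R_AbsRing) (window a) (fun y => exp (b * y ^ 2 / 2))).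
- apply is_derive_window.
- auto_derive; auto; exp_args_by_field; field.
- intros; apply Rmult_comm.
Qed.

Lemma window_ratio_lt a x y :
  0 < a -> Rabs x < Rabs y ->
  window a y / window a x < exp (- window_beta a * ((y ^ 2 - x ^ 2) / 2)).
Proof.
intros Ha Hxy.
assert (Hq := window_scaled_decr a (Rabs x) (Rabs y) Ha (Rabs_pos x) Hxy).
rewrite !window_abs, <- !Rsqr_pow2, <- !Rsqr_abs, !Rsqr_pow2 in Hq.
assert (Hwx := window_pos a x Ha).
replace (exp (- window_beta a * ((y ^ 2 - x ^ 2) / 2)))
  with (exp (window_beta a * x ^ 2 / 2) / exp (window_beta a * y ^ 2 / 2))
  by (unfold Rdiv; rewrite <- exp_Ropp, <- exp_plus; f_equal; field).
assert (Hex := exp_pos (window_beta a * x ^ 2 / 2)); assert (Hey := exp_pos (window_beta a * y ^ 2 / 2)).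
apply Rmult_lt_reg_r with (r := window a x * exp (window_beta a * y ^ 2 / 2)); [nra|].
replace (window a y / window a x * (window a x * exp (window_beta a * y ^ 2 / 2)))
  with (window a y * exp (window_beta a * y ^ 2 / 2)) by (field; lra).
replace (exp (window_beta a * x ^ 2 / 2) / exp (window_beta a * y ^ 2 / 2)
         * (window a x * exp (window_beta a * y ^ 2 / 2)))
  with (window a x * exp (window_beta a * x ^ 2 / 2)) by (field; lra).
exact Hq.
Qed.

Lemma exp_lt_window_ratio a x y :
  0 < a -> Rabs x < Rabs y -> exp (- 1 * ((y ^ 2 - x ^ 2) / 2)) < window a y / window a x.
Proof.
intros Ha Hxy.
assert (HJ := gauss_cosh_int_lt a x y Ha Hxy).
assert (HJx := gauss_cosh_int_pos a x Ha).
assert (Hgx := gauss_pos x); assert (Hgy := gauss_pos y).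
replace (exp (- 1 * ((y ^ 2 - x ^ 2) / 2))) with (gauss y / gauss x)
  by (unfold gauss, Rdiv; rewrite <- exp_Ropp, <- exp_plus; f_equal; field).
rewrite !window_eq.
apply Rmult_lt_reg_r with (r := gauss x * gauss_cosh_int a x); [nra|].
replace (gauss y / gauss x * (gauss x * gauss_cosh_int a x)) with (gauss y * gauss_cosh_int a x)
  by (field; lra).
replace (gauss y * gauss_cosh_int a y / (gauss x * gauss_cosh_int a x) * (gauss x * gauss_cosh_int a x))
  with (gauss y * gauss_cosh_int a y) by (field; lra).
apply Rmult_lt_compat_l; assumption.
Qed.

Lemma window_0 a : window a 0 = 2 * gauss_int a.
Proof.
rewrite window_eq, gauss_0; unfold gauss_cosh_int, gauss_int.
rewrite Rmult_1_l, <- (RInt_scalR gauss) by apply ex_RInt_gauss.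
apply RInt_ext; intros t _.
rewrite Rmult_0_l, two_cosh_0; unfold_R_ops; ring.
Qed.

Lemma gauss_cosh_int_le a y : 0 < a -> 0 < y -> gauss_cosh_int a y <= 2 * exp (y * a) * gauss_int a.
Proof.
intros Ha Hy; unfold gauss_cosh_int, gauss_int.
rewrite <- RInt_scalR by apply ex_RInt_gauss.
apply RInt_le; [lra | ex_RInt_by_continuity | ex_RInt_by_continuity |].
intros t Ht; unfold two_cosh; unfold_R_ops.
assert (exp (y * t) <= exp (y * a)) by (left; apply exp_increasing; nra).
assert (exp (- (y * t)) <= exp (y * a)) by (left; apply exp_increasing; nra).
assert (Hg := gauss_pos t); nra.
Qed.

Lemma gauss_cosh_int_ge a y :
  0 < a -> 2 * gauss_int a + y ^ 2 * (gauss_int a - a * gauss a) <= gauss_cosh_int a y.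
Proof.
intros Ha; rewrite <- gauss_sq_moment; unfold gauss_int, gauss_cosh_int.
rewrite <- (RInt_scalR gauss), <- (RInt_scalR (fun t => t ^ 2 * gauss t)), <- RInt_plusR
  by ex_RInt_by_continuity.
apply RInt_le; [lra | ex_RInt_by_continuity | ex_RInt_by_continuity |].
intros t _; unfold_R_ops.
assert (H := two_cosh_ge_quad (y * t)); assert (Hg := gauss_pos t).
replace (2 * gauss t + y ^ 2 * (t ^ 2 * gauss t)) with (gauss t * (2 + (y * t) ^ 2)) by ring.
apply Rmult_le_compat_l; lra.
Qed.

Lemma window_ratio_lower_sharp a al :
  0 < a -> al < 1 -> exists x y, Rabs x < Rabs y /\
    ~ (exp (- al * ((y ^ 2 - x ^ 2) / 2)) < window a y / window a x).
Proof.
intros Ha Hal.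
set (y := 2 * a / (1 - al) + 1).
assert (Hy : 0 < y) by (unfold y; assert (0 < 2 * a / (1 - al)) by (apply Rdiv_lt_0_compat; lra); lra).
assert (Hya : a <= (1 - al) * y / 2).
{ unfold y; replace ((1 - al) * (2 * a / (1 - al) + 1) / 2) with (a + (1 - al) / 2) by (field; lra); lra. }
exists 0, y; split; [rewrite Rabs_R0, Rabs_pos_eq; lra|].
apply Rle_not_lt; rewrite window_0, window_eq.
assert (HP := gauss_int_pos a Ha); assert (Hg := gauss_pos y).
assert (HJ := gauss_cosh_int_le a y Ha Hy).
apply Rle_trans with (gauss y * exp (y * a)).
- apply Rle_div_l; [lra|]; nra.
- unfold gauss; rewrite <- exp_plus; apply exp_le_exp_of_le.
  replace (- al * ((y ^ 2 - 0 ^ 2) / 2)) with (- y ^ 2 / 2 + y * ((1 - al) * y / 2)) by field.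
  apply Rplus_le_compat_l, Rmult_le_compat_l; lra.
Qed.

Lemma window_ratio_upper_sharp a b :
  0 < a -> window_beta a < b -> exists x y, Rabs x < Rabs y /\
    ~ (window a y / window a x < exp (- b * ((y ^ 2 - x ^ 2) / 2))).
Proof.
intros Ha Hb.
set (be := window_beta a) in *.
assert (HP := gauss_int_pos a Ha).
assert (Hbe_eq : gauss_int a - a * gauss a = gauss_int a * (1 - be)) by (unfold be, window_beta; field; lra).
assert (Hbe : be < 1) by (generalize (mul_gauss_lt_gauss_int a Ha) (gauss_pos a); nra).
set (D := 1 + Rabs (b - 1)).
assert (HD : Rabs (b - 1) < D) by (unfold D; lra).
assert (HDpos : 0 < D) by (generalize (Rabs_pos (b - 1)); lra).
set (s := (b - be) / ((1 - be) * D)).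
assert (Hs : 0 < s) by (unfold s; apply Rdiv_lt_0_compat; nra).
set (y := sqrt (2 * s)).
assert (Hy2 : y ^ 2 = 2 * s) by (unfold y; rewrite <- Rsqr_pow2, Rsqr_sqrt; lra).
assert (Hy : 0 < y) by (unfold y; apply sqrt_lt_R0; lra).
assert (Hkey : exp (- ((b - 1) * s)) <= 1 + (1 - be) * s).
{ apply exp_opp_mul_le; [lra | nra |].
  unfold s; replace (b - 1 + (1 - be) + (b - 1) * (1 - be) * ((b - be) / ((1 - be) * D)))
    with ((b - be) * (D + (b - 1)) / D) by (field; repeat split; lra).
  apply Rdiv_le_0_compat; [apply Rmult_le_pos | ]; [lra | | lra].
  generalize (Rle_abs (- (b - 1))); rewrite Rabs_Ropp; lra. }
exists 0, y; split; [rewrite Rabs_R0, Rabs_pos_eq; lra|].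
apply Rle_not_lt; rewrite window_0, window_eq.
replace (- b * ((y ^ 2 - 0 ^ 2) / 2)) with (- s + - ((b - 1) * s)) by (rewrite Hy2; field).
replace (gauss y) with (exp (- s)) by (unfold gauss; rewrite Hy2; f_equal; field).
assert (HJ := gauss_cosh_int_ge a y Ha); rewrite Hy2, Hbe_eq in HJ.
assert (He := exp_pos (- s)).
rewrite exp_plus; apply (Rle_div_r _ _ (2 * gauss_int a)); [lra|].
apply Rle_trans with (exp (- s) * (1 + (1 - be) * s) * (2 * gauss_int a)).
2:{ rewrite Rmult_assoc; apply Rmult_le_compat_l; lra. }
apply Rmult_le_compat_r; [lra|]; apply Rmult_le_compat_l; lra.
Qed.

Lemma one_lt_exp_mul_quad u :
  0 < u -> 1 < exp (u / 3 + u ^ 2 / 90) * (1 - u / 3 + 2 * u ^ 2 / 45).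
Proof.
intros Hu.
replace 1 with (exp (0 / 3 + 0 ^ 2 / 90) * (1 - 0 / 3 + 2 * 0 ^ 2 / 45)) at 1
  by (replace (0 / 3 + 0 ^ 2 / 90) with 0 by field; rewrite exp_0; field).
apply (strict_incr_of_derive_pos (fun u => exp (u / 3 + u ^ 2 / 90) * (1 - u / 3 + 2 * u ^ 2 / 45))
         (fun u => exp (u / 3 + u ^ 2 / 90) * (u ^ 2 / 135 + 2 * u ^ 3 / 2025)) 0); try lra.
- intros; auto_derive; auto; exp_args_by_field; field.
- intros z Hz; apply Rmult_lt_0_compat; [apply exp_pos|].
  assert (0 < z ^ 2) by (apply pow_lt; lra); assert (0 < z ^ 3) by (apply pow_lt; lra); lra.
Qed.

Lemma gauss_int_lt_exp a : 0 < a -> gauss_int a < a * exp (- a ^ 2 / 6 + a ^ 4 / 90).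
Proof.
intros Ha; apply Rlt_0_minus.
replace 0 with (0 * exp (- 0 ^ 2 / 6 + 0 ^ 4 / 90) - gauss_int 0) at 1
  by (unfold gauss_int; rewrite RInt_point; unfold_R_ops; ring).
apply (strict_incr_of_derive_pos (fun z => z * exp (- z ^ 2 / 6 + z ^ 4 / 90) - gauss_int z)
         (fun z => exp (- z ^ 2 / 6 + z ^ 4 / 90) * (1 - z ^ 2 / 3 + 2 * z ^ 4 / 45) - gauss z) 0);
  try lra.
- intros z _.
  apply (is_derive_minus (K:=R_AbsRing) (V:=R_NormedModule) (fun z => z * exp (- z ^ 2 / 6 + z ^ 4 / 90))).
  + auto_derive; auto; exp_args_by_field; field.
  + apply is_derive_gauss_int.
- intros z Hz.
  assert (Hp := one_lt_exp_mul_quad (z ^ 2) ltac:(apply pow_lt; lra)).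
  replace ((z ^ 2) ^ 2) with (z ^ 4) in Hp by ring.
  replace (exp (- z ^ 2 / 6 + z ^ 4 / 90)) with (gauss z * exp (z ^ 2 / 3 + z ^ 4 / 90))
    by (unfold gauss; rewrite <- exp_plus; f_equal; field).
  assert (Hg := gauss_pos z).
  replace (gauss z * exp (z ^ 2 / 3 + z ^ 4 / 90) * (1 - z ^ 2 / 3 + 2 * z ^ 4 / 45) - gauss z)
    with (gauss z * (exp (z ^ 2 / 3 + z ^ 4 / 90) * (1 - z ^ 2 / 3 + 2 * z ^ 4 / 45) - 1)) by ring.
  apply Rmult_lt_0_compat; lra.
Qed.

Lemma window_beta_gt a : 0 < a -> exp (- (2 * a) ^ 2 / 12 - (2 * a) ^ 4 / 1440) < window_beta a.
Proof.
intros Ha.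
assert (HU := gauss_int_lt_exp a Ha); assert (HP := gauss_int_pos a Ha); assert (Hg := gauss_pos a).
assert (HE := exp_pos (- a ^ 2 / 6 + a ^ 4 / 90)).
replace (exp (- (2 * a) ^ 2 / 12 - (2 * a) ^ 4 / 1440)) with (gauss a / exp (- a ^ 2 / 6 + a ^ 4 / 90))
  by (unfold gauss, Rdiv; rewrite <- exp_Ropp, <- exp_plus; f_equal; field).
unfold window_beta; apply Rlt_div_l; [exact HE|].
replace (a * gauss a / gauss_int a * exp (- a ^ 2 / 6 + a ^ 4 / 90))
  with (gauss a * (a * exp (- a ^ 2 / 6 + a ^ 4 / 90)) / gauss_int a) by (field; lra).
apply Rlt_div_r; [exact HP|].
apply Rmult_lt_compat_l; assumption.
Qed.

Lemma one_sub_lt_exp h : h <> 0 -> 1 - h ^ 2 / 12 < exp (- h ^ 2 / 12 - h ^ 4 / 1440).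
Proof.
intros Hh.
set (u := h ^ 2 / 12).
assert (Hu : 0 < u) by (unfold u; assert (0 < h ^ 2) by (apply pow2_gt_0, Hh); lra).
replace (- h ^ 2 / 12 - h ^ 4 / 1440) with (- (u + u ^ 2 / 10)) by (unfold u; field).
rewrite exp_Ropp; assert (HE := exp_pos (u + u ^ 2 / 10)).
apply Rmult_lt_reg_l with (exp (u + u ^ 2 / 10)); [exact HE|].
rewrite Rinv_r by lra.
apply Ropp_lt_cancel.
replace (- 1) with (- (exp (0 + 0 ^ 2 / 10) * (1 - 0))) at 1
  by (replace (0 + 0 ^ 2 / 10) with 0 by field; rewrite exp_0; ring).
apply (strict_incr_of_derive_pos (fun u => - (exp (u + u ^ 2 / 10) * (1 - u)))
         (fun u => exp (u + u ^ 2 / 10) * (4 * u / 5 + u ^ 2 / 5)) 0); try lra.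
- intros; auto_derive; auto; exp_args_by_field; field.
- intros z Hz; apply Rmult_lt_0_compat; [apply exp_pos|].
  assert (0 < z ^ 2) by (apply pow_lt; lra); lra.
Qed.

Lemma window_opp a y : window (- a) y = - window a y.
Proof.
unfold window; replace (y + - a) with (y - a) by ring; replace (y - - a) with (y + a) by ring; ring.
Qed.

Lemma Phi_ratio_eq h x y :
  h <> 0 -> Phi_ratio h x y = window (Rabs h / 2) y / window (Rabs h / 2) x.
Proof.
intros Hh.
set (a := Rabs h / 2).
assert (Ha : 0 < a) by (unfold a; generalize (Rabs_pos_lt h Hh); lra).
assert (Hs : 0 < sqrt (2 * PI)) by (apply sqrt_lt_R0; generalize PI_RGT_0; lra).
assert (Hwx := window_pos a x Ha).
assert (Hdiff : forall z, Phi (z + h / 2) - Phi (z - h / 2) = / sqrt (2 * PI) * window (h / 2) z)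
  by (intros; rewrite !Phi_gauss_int; unfold window; ring).
unfold Phi_ratio; rewrite !Hdiff.
destruct (Rle_or_lt 0 h) as [H0|H0].
- replace (h / 2) with a by (unfold a; rewrite Rabs_pos_eq; lra); field; repeat split; lra.
- replace (h / 2) with (- a) by (unfold a; rewrite Rabs_left; lra).
  rewrite !window_opp; field; repeat split; lra.
Qed.

Lemma beta_const_eq h : h <> 0 -> beta_const h = window_beta (Rabs h / 2).
Proof.
intros Hh.
set (a := Rabs h / 2).
assert (Ha : 0 < a) by (unfold a; generalize (Rabs_pos_lt h Hh); lra).
assert (HP := gauss_int_pos a Ha).
assert (Hs : 0 < sqrt (2 * PI)) by (apply sqrt_lt_R0; generalize PI_RGT_0; lra).
assert (Eexp : exp (- h ^ 2 / 8) = gauss a)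
  by (unfold gauss, a; rewrite <- (pow2_abs h); f_equal; field).
unfold beta_const, window_beta; rewrite Phi_gauss_int, Eexp.
destruct (Rle_or_lt 0 h) as [H0|H0].
- replace (h / 2) with a by (unfold a; rewrite Rabs_pos_eq; lra); field; repeat split; lra.
- replace (h / 2) with (- a) by (unfold a; rewrite Rabs_left; lra).
  rewrite gauss_int_opp; field; repeat split; lra.
Qed.

Theorem lemma3p3 (h : R) (hh : h <> 0) :
  let alpha := 1 in
  let beta := beta_const h in
  (forall x y : R, Rabs x < Rabs y ->
      exp (- alpha * ((y ^ 2 - x ^ 2) / 2)) < Phi_ratio h x y /\
      Phi_ratio h x y < exp (- beta * ((y ^ 2 - x ^ 2) / 2))) /\
  (forall a : R, a < alpha -> exists x y : R, Rabs x < Rabs y /\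
      ~ (exp (- a * ((y ^ 2 - x ^ 2) / 2)) < Phi_ratio h x y)) /\
  (forall b : R, beta < b -> exists x y : R, Rabs x < Rabs y /\
      ~ (Phi_ratio h x y < exp (- b * ((y ^ 2 - x ^ 2) / 2)))) /\
  exp (- h ^ 2 / 12 - h ^ 4 / 1440) < beta /\
  1 - h ^ 2 / 12 < exp (- h ^ 2 / 12 - h ^ 4 / 1440).
Proof.
intros alpha beta; subst alpha beta.
set (a := Rabs h / 2).
assert (Ha : 0 < a) by (unfold a; generalize (Rabs_pos_lt h hh); lra).
assert (Eh : h ^ 2 = (2 * a) ^ 2) by (unfold a; rewrite <- (pow2_abs h); f_equal; field).
assert (Hratio : forall x y, Phi_ratio h x y = window a y / window a x)
  by (intros; apply Phi_ratio_eq, hh).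
rewrite beta_const_eq by exact hh; fold a.
setoid_rewrite Hratio.
split; [|split; [|split; [|split]]].
- intros x y Hxy; split; [apply exp_lt_window_ratio | apply window_ratio_lt]; assumption.
- intros al Hal; apply window_ratio_lower_sharp; assumption.
- intros b Hb; apply window_ratio_upper_sharp; assumption.
- replace (h ^ 4) with ((h ^ 2) ^ 2) by ring; rewrite Eh.
  replace (((2 * a) ^ 2) ^ 2) with ((2 * a) ^ 4) by ring.
  apply window_beta_gt, Ha.
- apply one_sub_lt_exp, hh.
Qed.
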